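(* Consider the caching network and the backhaul-eavesdropper scenario $S_1$ described in the context, with every user served by exactly one SBS ($\gamma_1=1$), and a placement $\mathbf{m}=(m_1,\dots,m_N)$ of integers $0\le m_j\le n$ filling the caches, i.e., $\sum_{j=1}^N m_j = nM$. If the network is secure in scenario $S_1$, then $$M > N - \frac{\eta}{Q},\qquad \text{where } \eta\triangleq\sum_{j=1}^N \frac{1}{p_j}.$$
   Context: A macro base station (MBS) has access to a library of $N$ files $F_1,\dots,F_N$; file $F_j$ is requested with probability $p_j>0$, $\sum_j p_j=1$. There are $N_{\text{SBS}}$ small-cell base stations (SBSs), each with a cache of size $M$ files. Each file is split into $n$ fragments and encoded with a code such that any $n$ distinct encoded packets of a file suffice to recover it, while fewer than $n$ distinct packets do not allow recovery. A placement $\mathbf{m}$ means each SBS stores $m_j$ encoded packets of $F_j$, with packets stored at different SBSs all distinct. A user is served by exactly $d$ SBSs with probability $\gamma_d$, $d=1,\dots,S$. A user requesting $F_j$ and served by $d$ SBSs receives $d m_j$ distinct packets from them, and the MBS sends the missing $n(1-\min(1,d m_j/n))$ new distinct packets over the backhaul. Scenario $S_1$: each SBS receives $Q>0$ requests during delivery, $Q p_j$ of them for $F_j$; an eavesdropper intercepts all packets sent over one MBS-to-SBS link, collecting $P_j=\sum_{d=1}^{S} Q\gamma_d p_j\, n(1-\min(1,d m_j/n))$ distinct packets of $F_j$. The network is secure in scenario $S_1$ if $P_j<n$ for all $j$. *)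

From mathcomp Require Import all_boot all_order all_algebra.
Unset Printing Implicit Defensive.
Import Order.TTheory GRing.Theory Num.Theory.
Local Open Scope ring_scope.

(* Number of distinct packets of file F_j collected by the eavesdropper on one
   MBS-to-SBS link in scenario S_1:
   P_j = sum_{d=1}^S Q gamma_d p_j n (1 - min(1, d m_j / n)). *)
Definition P_S1 {R : realFieldType} (n S : nat) (Q : R) (gamma : nat -> R)
    (pj : R) (mj : nat) : R :=
  \sum_(1 <= d < S.+1)
     Q * gamma d * pj * (n%:R * (1 - Num.min 1 ((d * mj)%:R / n%:R))).

Definition secure_S1 {R : realFieldType} (N n S : nat) (Q : R)
    (gamma : nat -> R) (p : 'I_N -> R) (m : 'I_N -> nat) : Prop :=
  forall j : 'I_N, P_S1 n S Q gamma (p j) (m j) < n%:R.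

Definition eta {R : realFieldType} (N : nat) (p : 'I_N -> R) : R :=
  \sum_(j < N) (p j)^-1.

From mathcomp Require Import all_boot all_order all_algebra.
From mathcomp Require Import ring lra.
Import Order.TTheory GRing.Theory Num.Theory.
Set Implicit Arguments.
Unset Strict Implicit.
Local Open Scope ring_scope.

(* With gamma_1 = 1 the eavesdropped link carries at least Q p_j (n - m_j)
   packets of F_j, so security forces n - m_j < n / (Q p_j).  Summing over j
   and using sum_j m_j = n M gives n N - n M < n eta / Q. *)

Section SingleLinkLoad.

Variable R : realFieldType.

Lemma missing_packetsE (n k : nat) : (0 < n)%N -> (k <= n)%N ->
  n%:R * (1 - Num.min 1 (k%:R / n%:R)) = n%:R - k%:R :> R.
Proof.
move=> n_gt0 k_le_n; have n_gt0R : 0 < n%:R :> R by rewrite ltr0n.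
have -> : Num.min 1 (k%:R / n%:R) = k%:R / n%:R :> R.
  by apply: min_r; rewrite ler_pdivrMr // mul1r ler_nat.
by field; rewrite gt_eqF.
Qed.

Lemma P_S1_ge_single_link (n S : nat) (Q pj : R) (gamma : nat -> R) (mj : nat) :
  (0 < n)%N -> (1 <= S)%N -> 0 <= Q -> 0 <= pj -> (forall d, 0 <= gamma d) ->
  (mj <= n)%N ->
  Q * gamma 1%N * pj * (n%:R - mj%:R) <= P_S1 n S Q gamma pj mj.
Proof.
move=> n_gt0 S_ge1 Q_ge0 pj_ge0 gamma_ge0 mj_le_n.
rewrite /P_S1 big_ltn ?ltnS // mul1n missing_packetsE // lerDl.
apply: sumr_ge0 => d _; rewrite !mulr_ge0 //.
by rewrite subr_ge0 ge_min lexx.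
Qed.

Lemma secure_S1_missing_lt (N n S : nat) (Q : R) (gamma : nat -> R)
    (p : 'I_N -> R) (m : 'I_N -> nat) :
  (0 < n)%N -> (1 <= S)%N -> 0 < Q -> (forall j, 0 < p j) ->
  (forall d, 0 <= gamma d) -> gamma 1%N = 1 -> (forall j, (m j <= n)%N) ->
  secure_S1 N n S Q gamma p m ->
  forall j, n%:R - (m j)%:R < n%:R * ((p j)^-1 / Q).
Proof.
move=> n_gt0 S_ge1 Q_gt0 p_gt0 gamma_ge0 gamma1 m_le_n secure j.
have Qp_gt0 : 0 < Q * p j by apply: mulr_gt0.
have load := P_S1_ge_single_link n_gt0 S_ge1 (ltW Q_gt0) (ltW (p_gt0 j))
  gamma_ge0 (m_le_n j).
rewrite gamma1 mulr1 in load.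
have -> : n%:R * ((p j)^-1 / Q) = n%:R / (Q * p j).
  by field; rewrite !gt_eqF.
by rewrite ltr_pdivlMr // mulrC; apply: le_lt_trans load (secure j).
Qed.

End SingleLinkLoad.

Theorem corollary2 (R : realFieldType) (N n M S : nat) (Q : R)
    (p : 'I_N -> R) (gamma : nat -> R) (m : 'I_N -> nat) :
  (0 < n)%N ->
  (1 <= S)%N ->
  (forall j, 0 < p j) ->
  \sum_(j < N) p j = 1 ->
  (forall d, 0 <= gamma d) ->
  \sum_(1 <= d < S.+1) gamma d = 1 ->
  gamma 1%N = 1 ->
  0 < Q ->
  (forall j, (m j <= n)%N) ->
  (\sum_(j < N) m j)%N = (n * M)%N ->
  secure_S1 N n S Q gamma p m ->
  N%:R - eta N p / Q < M%:R.
Proof.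
move=> n_gt0 S_ge1 p_gt0 p_sum1 gamma_ge0 _ gamma1 Q_gt0 m_le_n m_sum secure.
have gap := secure_S1_missing_lt n_gt0 S_ge1 Q_gt0 p_gt0 gamma_ge0 gamma1
  m_le_n secure.
have N_gt0 : (0 < N)%N.
  by case: N p p_sum1 {p_gt0 m m_le_n m_sum secure gap} => [p|//];
    rewrite big_ord0 => /eqP; rewrite eq_sym oner_eq0.
have nonempty : has xpredT (index_enum 'I_N).
  by apply/hasP; exists (Ordinal N_gt0); rewrite ?mem_index_enum.
have := ltr_sum nonempty (fun j _ => gap j).
rewrite sumrB -mulr_sumr -mulr_suml sumr_const card_ord -natr_sum m_sum.
rewrite -/(eta N p) natrM -mulr_natr => total.
have n_gt0R : 0 < n%:R :> R by rewrite ltr0n.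
by rewrite -(ltr_pM2l n_gt0R) mulrBr mulrA; lra.
Qed.
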